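(* For every $\zeta=(\zeta^\alpha_i)\in\mathcal A^{\mathsf A}_{\mathsf I}$ there exists a unique family $(\phi_k)_{k\in\mathsf I}$, $\phi_k=(\phi^\alpha_k)\in\mathcal A^{\mathsf A}$, such that $$\zeta=\sum_{k\in\mathsf I}\varepsilon^k_{\phi_k}$$ (the sum is finite in each component, since $(\varepsilon^k_\phi)^\alpha_i=0$ unless $k\le i$), and it is given by $$\phi^\alpha_k=\sum_{i,j\in\mathsf I,\ i+j=k}(-1)^{|j|}\binom{k}{i}D_j\zeta^\alpha_i .$$ Thus $\mathcal A^{\mathsf A}_{\mathsf I}$ is $\mathsf I$-graded by the subspaces $\Phi^k$, $k\in\mathsf I$.
   Context: $\mathbb F\in\{\mathbb R,\mathbb C\}$, $m\in\mathbb N$, $\mathsf A$ a finite index set, $\mathsf I=\mathbb Z_+^m$, $|j|=j^1+\dots+j^m$, $k\le i$ componentwise, $\binom{k}{i}=\prod_\mu\binom{k^\mu}{i^\mu}$. Variables $x^\mu$ ($\mu=1,\dots,m$) on $\mathbb R^m$ and $u^\alpha_i$ ($\alpha\in\mathsf A$, $i\in\mathsf I$); $\mathcal A$ is the algebra of smooth $\mathbb F$-valued functions each depending on finitely many of these variables; $D_\mu=\partial_{x^\mu}+\sum_{\alpha,i}u^\alpha_{i+(\mu)}\partial_{u^\alpha_i}$ where $(\mu)$ is the multi-index with $1$ in position $\mu$; $D_j=D_1^{j^1}\cdots D_m^{j^m}$. $\mathcal A^{\mathsf A}$ is the space of tuples $(\phi^\alpha)_{\alpha\in\mathsf A}$ in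 $\mathcal A$, $\mathcal A^{\mathsf A}_{\mathsf I}$ the space of all families $(\zeta^\alpha_i)_{\alpha\in\mathsf A,i\in\mathsf I}$ in $\mathcal A$. For $k\in\mathsf I$, $\phi\in\mathcal A^{\mathsf A}$: $(\varepsilon^k_\phi)^\alpha_i=\binom{i}{k}D_{i-k}\phi^\alpha$ if $k\le i$ and $0$ otherwise, and $\Phi^k=\{\varepsilon^k_\phi\mid\phi\in\mathcal A^{\mathsf A}\}$. *)

From HB Require Import structures.
From mathcomp Require Import all_boot all_order all_algebra.
Set Implicit Arguments. Unset Strict Implicit. Unset Printing Implicit Defensive.
Import Order.TTheory GRing.Theory Num.Theory.
Local Open Scope ring_scope.

Definition mi (m : nat) := {ffun 'I_m -> nat}.

Definition mi_le m (k i : mi m) : bool := [forall mu, (k mu <= i mu)%N].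

Definition mi_add m (i j : mi m) : mi m := [ffun mu => (i mu + j mu)%N].
Definition mi_sub m (i k : mi m) : mi m := [ffun mu => (i mu - k mu)%N].

Definition mi_abs m (j : mi m) : nat := (\sum_(mu < m) j mu)%N.

Definition mi_binom m (k i : mi m) : nat := (\prod_(mu < m) 'C(k mu, i mu))%N.

Definition box m (n : nat) : seq (mi m) :=
  [seq [ffun mu => val (f mu)] | f : {ffun 'I_m -> 'I_n}].

(* a bound such that every k <= i lies in box (bound i) *)
Definition bound m (i : mi m) : nat := (\max_(mu < m) i mu).+1.

Section TotalDerivatives.
Variables (V : zmodType) (m : nat) (D : 'I_m -> {additive V -> V}).

Definition Dmi (j : mi m) : V -> V :=
  foldr (fun mu f => iter (j mu) (D mu) \o f) id (enum 'I_m).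

Variable (Aset : finType).

Definition eps (k : mi m) (phi : Aset -> V) (alpha : Aset) (i : mi m) : V :=
  if mi_le k i then (Dmi (mi_sub i k) (phi alpha)) *+ mi_binom i k else 0.

(* (sum_{k in I} eps^k_{phi_k})^alpha_i ; only terms with k <= i are nonzero,
   and all of them have k in box (bound i). *)
Definition eps_sum (phi : mi m -> Aset -> V) (alpha : Aset) (i : mi m) : V :=
  \sum_(k <- box m (bound i)) eps k (phi k) alpha i.

Definition phi_formula (zeta : Aset -> mi m -> V) (k : mi m) (alpha : Aset) : V :=
  \sum_(i <- box m (bound k))
    \sum_(j <- box m (bound k) | mi_add i j == k)
      (Dmi j (zeta alpha i)) *+ mi_binom k i *~ ((-1) ^+ mi_abs j).

End TotalDerivatives.

From HB Require Import structures.
From mathcomp Require Import all_boot all_algebra ring zify.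
Import GRing.Theory.

Set Implicit Arguments.
Unset Strict Implicit.

(* Both [eps_sum] and [phi_formula] are lower-triangular transforms
   [z |-> (sum_l c(i,l) D_(i-l) z_l)_i] for the coefficient matrices [binom(i,l)] and
   [(-1)^|i-l| binom(i,l)] respectively.  Since the [D_mu] commute,
   [D_(i-k) D_(k-l) = D_(i-l)], so composing two such transforms multiplies their
   coefficient matrices.  The two matrices are mutually inverse: the product is a
   product over coordinates of one-variable sums
   [sum_a binom(K,a) binom(a,L) (-1)^(a-L) = binom(K,L) (1-1)^(K-L)], by
   [binom(K,a) binom(a,L) = binom(K,L) binom(K-L,a-L)] and the binomial theorem.
   Hence [zeta |-> phi] and [phi |-> zeta] are inverse bijections. *)

Lemma bin_mul_bin K a L : L <= a <= K ->
  'C(K, a) * 'C(a, L) = 'C(K, L) * 'C(K - L, a - L).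
Proof.
case/andP=> hLa haK; have hLK := leq_trans hLa haK.
have hfact : 0 < L`! * (a - L)`! * (K - a)`! by rewrite !muln_gt0 !fact_gt0.
apply/eqP; rewrite -(eqn_pmul2r hfact); apply/eqP.
have hK := bin_fact haK; have ha := bin_fact hLa; have hKL := bin_fact hLK.
have hKLa := bin_fact (leq_sub2r L haK).
rewrite subnBA // subnK // in hKLa.
transitivity K`!; first by rewrite -hK -ha; ring.
by rewrite -hKL -hKLa; ring.
Qed.

Local Open Scope ring_scope.

Lemma sum_bin_mul_bin (R : comPzRingType) (x y : R) N K L : (K < N)%N -> x + y = 0 ->
  \sum_(a < N) ('C(K, a) * 'C(a, L))%N%:R * (x ^+ (a - L) * y ^+ (K - a)) = (L == K)%:R.
Proof.
move=> hKN hxy.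
rewrite -(big_mkord xpredT
  (fun a => ('C(K, a) * 'C(a, L))%N%:R * (x ^+ (a - L) * y ^+ (K - a)))).
rewrite (big_cat_nat (n := K.+1)) //=.
rewrite [X in _ + X]big_nat_cond [X in _ + X]big1 ?addr0; last first.
  by move=> a /andP[/andP[ha _] _]; rewrite bin_small ?mul0n ?mul0r.
have [hLK|hKL] := leqP L K; last first.
  rewrite gtn_eqF // big_nat_cond big1 // => a /andP[/andP[_ ha] _].
  by rewrite [X in (_ * X)%N]bin_small ?muln0 ?mul0r // (leq_ltn_trans _ hKL).
rewrite (big_cat_nat (n := L)) ?(leqW hLK) //= big_nat_cond big1 ?add0r; last first.
  by move=> a /andP[/andP[_ ha] _]; rewrite [X in (_ * X)%N]bin_small ?muln0 ?mul0r.
rewrite -{1}(add0n L) big_addn subSn // big_mkord.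
transitivity ('C(K, L)%:R * (y + x) ^+ (K - L)).
  rewrite exprDn mulr_sumr; apply: eq_bigr => b _.
  have hb := ltn_ord b; rewrite bin_mul_bin ?leq_addl ?addnK //=; last lia.
  rewrite natrM -mulrA; congr (_ * _); rewrite mulr_natl mulrC.
  by congr (_ ^+ _ * _ *+ _); lia.
rewrite addrC hxy expr0n subn_eq0; case: (eqVneq L K) => [<-|hne].
  by rewrite leqnn binn mulr1.
by rewrite leqNgt ltn_neqAle hne hLK mulr0.
Qed.

Section MultiIndex.
Variable m : nat.
Implicit Types (i j k l : mi m) (N : nat).

Lemma mem_box N l : (l \in box m N) = [forall mu, (l mu < N)%N].
Proof.
apply/imageP/forallP => [[f _ ->] mu|hl]; first by rewrite ffunE ltn_ord.
by exists [ffun mu => Ordinal (hl mu)] => //; apply/ffunP => mu; rewrite !ffunE.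
Qed.

Lemma uniq_box N : uniq (box m N).
Proof.
rewrite map_inj_uniq ?enum_uniq // => f g /ffunP efg.
by apply/ffunP => mu; apply: val_inj; have := efg mu; rewrite !ffunE.
Qed.

Lemma mem_box_bound i : i \in box m (bound i).
Proof. by rewrite mem_box; apply/forallP => mu; rewrite ltnS (leq_bigmax mu). Qed.

Lemma mi_leP k i : reflect (forall mu, k mu <= i mu)%N (mi_le k i).
Proof. exact: forallP. Qed.

Lemma mem_box_le N l i : mi_le l i -> i \in box m N -> l \in box m N.
Proof.
move=> /mi_leP hli; rewrite !mem_box => /forallP hi.
by apply/forallP => mu; apply: leq_ltn_trans (hli mu) (hi mu).
Qed.

Lemma mi_binom_eq0 i l : ~~ mi_le l i -> mi_binom i l = 0%N.
Proof.
rewrite negb_forall => /existsP [mu]; rewrite -ltnNge => hmu.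
by rewrite /mi_binom (bigD1 mu) //= bin_small.
Qed.

Lemma mi_add_subKC i k : mi_le i k -> mi_add i (mi_sub k i) = k.
Proof. by move=> /mi_leP hik; apply/ffunP => mu; rewrite !ffunE subnKC. Qed.

Lemma mi_le_addr i j : mi_le i (mi_add i j).
Proof. by apply/mi_leP => mu; rewrite ffunE leq_addr. Qed.

Lemma mi_addI i : injective (mi_add i).
Proof.
by move=> j j' /ffunP ejj'; apply/ffunP => mu; have := ejj' mu; rewrite !ffunE => /addnI.
Qed.

Lemma mi_add_sub l k i : mi_le l k -> mi_le k i ->
  mi_add (mi_sub i k) (mi_sub k l) = mi_sub i l.
Proof.
move=> /mi_leP hlk /mi_leP hki; apply/ffunP => mu; rewrite !ffunE.
by rewrite addnBA // subnK // (leq_trans (hlk mu)).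
Qed.

Lemma mi_subnn i : mi_sub i i = [ffun => 0%N].
Proof. by apply/ffunP => mu; rewrite !ffunE subnn. Qed.

Lemma big_box_lower (W : nmodType) N N' i (F : mi m -> W) :
  i \in box m N -> i \in box m N' -> (forall l, ~~ mi_le l i -> F l = 0) ->
  \sum_(l <- box m N) F l = \sum_(l <- box m N') F l.
Proof.
move=> hN hN' F0.
have sum_lower r : \sum_(l <- r) F l = \sum_(l <- r | mi_le l i) F l.
  by rewrite [RHS]big_mkcond; apply: eq_bigr => l _; case: ifP => // /negbT /F0.
rewrite [LHS]sum_lower [RHS]sum_lower -[LHS]big_filter -[RHS]big_filter.
apply/perm_big/uniq_perm; rewrite ?filter_uniq ?uniq_box // => l. rewrite !mem_filter; case hli: (mi_le l i) => //=.
by rewrite !(mem_box_le hli).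
Qed.

Lemma sum_box_prod (R : comPzSemiRingType) N (G : 'I_m -> nat -> R) :
  \sum_(l <- box m N) \prod_mu G mu (l mu) = \prod_mu \sum_(a < N) G mu a.
Proof.
rewrite bigA_distr_bigA big_image /=.
by apply: eq_bigr => f _; apply: eq_bigr => mu _; rewrite ffunE.
Qed.

Lemma exprn_mi_abs (R : pzSemiRingType) (x : R) j : x ^+ mi_abs j = \prod_mu x ^+ j mu.
Proof. by rewrite (big_morph _ (exprD x) (expr0 x)). Qed.

Lemma prod_eq_mi (R : comPzSemiRingType) l k : \prod_mu ((l mu == k mu)%:R : R) = (l == k)%:R.
Proof.
case: (eqVneq l k) => [->|nelk]; first by rewrite big1 // => mu _; rewrite eqxx.
have : ~~ [forall mu, l mu == k mu].
  by apply: contra nelk => /forallP elk; apply/eqP/ffunP => mu; apply/eqP.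
by rewrite negb_forall => /existsP [mu /negbTE hmu]; rewrite (bigD1 mu) //= hmu mul0r.
Qed.

Lemma sum_mi_binom_mul (R : comPzRingType) (x y : R) N i l : i \in box m N -> x + y = 0 ->
  \sum_(k <- box m N) (mi_binom i k * mi_binom k l)%N%:R
      * (x ^+ mi_abs (mi_sub k l) * y ^+ mi_abs (mi_sub i k)) = (l == i)%:R.
Proof.
rewrite mem_box => /forallP hi hxy; rewrite -prod_eq_mi.
transitivity (\sum_(k <- box m N) \prod_mu (('C(i mu, k mu) * 'C(k mu, l mu))%N%:R
    * (x ^+ (k mu - l mu) * y ^+ (i mu - k mu)))).
  apply: eq_bigr => k _; rewrite natrM /mi_binom !natr_prod !exprn_mi_abs -!big_split /=.
  by apply: eq_bigr => mu _; rewrite !ffunE natrM.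
rewrite (sum_box_prod N (fun mu a => ('C(i mu, a) * 'C(a, l mu))%N%:R
                                    * (x ^+ (a - l mu) * y ^+ (i mu - a)))).
by apply: eq_bigr => mu _; rewrite sum_bin_mul_bin.
Qed.

End MultiIndex.

Section TotalDerivativeMultiIndex.
Variables (V : zmodType) (m : nat) (D : 'I_m -> {additive V -> V}).
Hypothesis D_comm : forall (mu nu : 'I_m) (x : V), D mu (D nu x) = D nu (D mu x).
Implicit Types (j : mi m) (s : seq 'I_m).

(* [Dmi D j] is [Dseq (enum 'I_m) j]; freeing the list of directions makes the
   composition law provable by induction. *)
Definition Dseq s j : V -> V := foldr (fun mu f => iter (j mu) (D mu) \o f) id s.

Lemma iter_D_is_zmod_morphism mu n : zmod_morphism (iter n (D mu)).
Proof. by elim: n => // n IHn x y /=; rewrite IHn raddfB. Qed.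

Lemma Dseq_is_zmod_morphism s j : zmod_morphism (Dseq s j).
Proof. by elim: s => // mu s IHs x y /=; rewrite IHs iter_D_is_zmod_morphism. Qed.

HB.instance Definition _ j :=
  GRing.isZmodMorphism.Build V V (Dmi D j) (Dseq_is_zmod_morphism (enum 'I_m) j).

Lemma iter_D_comm mu nu a b x :
  iter a (D mu) (iter b (D nu) x) = iter b (D nu) (iter a (D mu) x).
Proof.
have D_iter c y : D mu (iter c (D nu) y) = iter c (D nu) (D mu y).
  by elim: c => //= c <-; rewrite D_comm.
by elim: a => //= a ->; rewrite D_iter.
Qed.

Lemma Dseq_iter s j mu n x : Dseq s j (iter n (D mu) x) = iter n (D mu) (Dseq s j x).
Proof. by elim: s => //= nu s ->; rewrite iter_D_comm. Qed.

Lemma Dseq_add s j j' x : Dseq s j (Dseq s j' x) = Dseq s (mi_add j j') x.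
Proof. by elim: s => //= mu s IHs; rewrite Dseq_iter IHs ffunE iterD. Qed.

Lemma Dmi_add j j' x : Dmi D j (Dmi D j' x) = Dmi D (mi_add j j') x.
Proof. exact: Dseq_add. Qed.

Lemma Dmi0 x : Dmi D [ffun => 0%N] x = x.
Proof. by rewrite /Dmi; elim: (enum 'I_m) => //= mu s; rewrite ffunE. Qed.

End TotalDerivativeMultiIndex.

Section TriangularTransform.
Variables (V : zmodType) (m : nat) (D : 'I_m -> {additive V -> V}).
Hypothesis D_comm : forall (mu nu : 'I_m) (x : V), D mu (D nu x) = D nu (D mu x).
Implicit Types (i k l : mi m) (c : mi m -> mi m -> int) (z : mi m -> V).

Definition lower_triangular c := forall i l, ~~ mi_le l i -> c i l = 0.

Definition Dtrans c z i : V :=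
  \sum_(l <- box m (bound i)) Dmi D (mi_sub i l) (z l) *~ c i l.

Definition tri_mul c c' i l : int := \sum_(k <- box m (bound i)) c i k * c' k l.

Lemma eq_Dtrans c z z' : z =1 z' -> Dtrans c z =1 Dtrans c z'.
Proof. by move=> ezz' i; apply: eq_bigr => l _; rewrite ezz'. Qed.

Lemma Dtrans_box N c z i : lower_triangular c -> i \in box m N ->
  Dtrans c z i = \sum_(l <- box m N) Dmi D (mi_sub i l) (z l) *~ c i l.
Proof.
move=> c_tri hi; apply: big_box_lower (mem_box_bound i) hi _ => l /c_tri ->.
by rewrite mulr0z.
Qed.

Lemma Dtrans_comp c c' z i : lower_triangular c -> lower_triangular c' ->
  Dtrans c (Dtrans c' z) i = Dtrans (tri_mul c c') z i.
Proof.
move=> c_tri c'_tri; rewrite [Dtrans c _ i]/Dtrans [RHS]/Dtrans /tri_mul.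
under [RHS]eq_bigr do rewrite mulrz_sumr.
rewrite [RHS]exchange_big /=; apply: eq_bigr => k _.
have [hki|/c_tri cik0] := boolP (mi_le k i); last first.
  by rewrite cik0 mulr0z big1 // => l _; rewrite mul0r mulr0z.
rewrite (Dtrans_box z c'_tri (mem_box_le hki (mem_box_bound i))).
rewrite raddf_sum mulrz_suml; apply: eq_bigr => l _.
have [hlk|/c'_tri ckl0] := boolP (mi_le l k); last first.
  by rewrite ckl0 mulr0 !mulr0z raddf0 mul0rz.
by rewrite raddfMz /= Dmi_add // mi_add_sub // -mulrzA mulrC.
Qed.

Lemma Dtrans_id c z i : (forall l, c i l = (l == i)%:R) -> Dtrans c z i = z i.
Proof.
move=> c_id; rewrite /Dtrans (bigD1_seq i) ?mem_box_bound ?uniq_box //=.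
rewrite c_id eqxx mulr1z mi_subnn Dmi0 big1 ?addr0 // => l /negbTE nli.
by rewrite c_id nli mulr0z.
Qed.

End TriangularTransform.

Section BinomialCoefficients.
Context {m : nat}.
Implicit Types (i k l : mi m).

Definition bin_coef i l : int := (mi_binom i l)%:R.

Definition signed_bin_coef i l : int :=
  (mi_binom i l)%:R * (-1) ^+ mi_abs (mi_sub i l).

Lemma bin_coef_lower : lower_triangular bin_coef.
Proof. by move=> i l /mi_binom_eq0; rewrite /bin_coef => ->. Qed.

Lemma signed_bin_coef_lower : lower_triangular signed_bin_coef.
Proof. by move=> i l /mi_binom_eq0; rewrite /signed_bin_coef => ->; rewrite mul0r. Qed.

Lemma tri_mul_bin_signed i l : tri_mul bin_coef signed_bin_coef i l = (l == i)%:R.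
Proof.
rewrite -(sum_mi_binom_mul (x := -1) (y := 1) l (mem_box_bound i)) ?addNr //.
by apply: eq_bigr => k _; rewrite expr1n mulr1 natrM mulrA.
Qed.

Lemma tri_mul_signed_bin i l : tri_mul signed_bin_coef bin_coef i l = (l == i)%:R.
Proof.
rewrite -(sum_mi_binom_mul (x := 1) (y := -1) l (mem_box_bound i)) ?subrr //.
by apply: eq_bigr => k _; rewrite expr1n mul1r natrM mulrAC.
Qed.

End BinomialCoefficients.

Section Inversion.
Variables (V : zmodType) (m : nat) (Aset : finType) (D : 'I_m -> {additive V -> V}).

Lemma eps_sumE (phi : mi m -> Aset -> V) alpha :
  eps_sum D phi alpha =1 Dtrans D bin_coef (phi^~ alpha).
Proof.
move=> i; apply: eq_bigr => l _; rewrite /eps /bin_coef mulrz_nat.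
by case: ifP => // /negbT /mi_binom_eq0 ->.
Qed.

Lemma phi_formulaE (zeta : Aset -> mi m -> V) alpha :
  (phi_formula D zeta)^~ alpha =1 Dtrans D signed_bin_coef (zeta alpha).
Proof.
move=> k; apply: eq_bigr => i _; rewrite /signed_bin_coef mulrzA mulrz_nat.
have [hik|hik] := boolP (mi_le i k); last first.
  rewrite mi_binom_eq0 // mulr0n mul0rz big1 // => j /eqP eijk.
  by move: hik; rewrite -eijk mi_le_addr.
have hj : mi_sub k i \in box m (bound k).
  rewrite mem_box; apply/forallP => mu; rewrite ffunE ltnS.
  exact: leq_trans (leq_subr _ _) (leq_bigmax mu).
rewrite big_mkcond (bigD1_seq _ hj (uniq_box _ _)) /= mi_add_subKC // eqxx.
rewrite big1 ?addr0 // => j neji; case: eqP => // eijk; case/eqP: neji.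
by apply: (@mi_addI _ i); rewrite eijk mi_add_subKC.
Qed.

Hypothesis D_comm : forall (mu nu : 'I_m) (x : V), D mu (D nu x) = D nu (D mu x).

Lemma Dtrans_bin_signedK (z : mi m -> V) i :
  Dtrans D bin_coef (Dtrans D signed_bin_coef z) i = z i.
Proof.
rewrite (Dtrans_comp D_comm _ _ bin_coef_lower signed_bin_coef_lower).
by apply: Dtrans_id => l; apply: tri_mul_bin_signed.
Qed.

Lemma Dtrans_signed_binK (z : mi m -> V) i :
  Dtrans D signed_bin_coef (Dtrans D bin_coef z) i = z i.
Proof.
rewrite (Dtrans_comp D_comm _ _ signed_bin_coef_lower bin_coef_lower).
by apply: Dtrans_id => l; apply: tri_mul_signed_bin.
Qed.

End Inversion.

Theorem mainTheorem16 (V : zmodType) (m : nat) (Aset : finType)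
  (D : 'I_m -> {additive V -> V})
  (D_comm : forall (mu nu : 'I_m) (x : V), D mu (D nu x) = D nu (D mu x))
  (zeta : Aset -> mi m -> V) :
  (exists phi : mi m -> Aset -> V,
      forall alpha i, zeta alpha i = eps_sum D phi alpha i) /\
  (forall phi : mi m -> Aset -> V,
      (forall alpha i, zeta alpha i = eps_sum D phi alpha i) <->
      (forall k alpha, phi k alpha = phi_formula D zeta k alpha)).
Proof.
have eps_sum_formula phi : (forall k alpha, phi k alpha = phi_formula D zeta k alpha) ->
    forall alpha i, zeta alpha i = eps_sum D phi alpha i.
  move=> ephi alpha i; rewrite eps_sumE (eq_Dtrans _ _ (fun k => ephi k alpha)).
  by rewrite (eq_Dtrans _ _ (phi_formulaE D zeta alpha)) (Dtrans_bin_signedK D_comm).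
split; first by exists (phi_formula D zeta); apply: eps_sum_formula.
move=> phi; split=> [ezeta k alpha|]; last exact: eps_sum_formula.
rewrite phi_formulaE (eq_Dtrans _ _ (ezeta alpha)) (eq_Dtrans _ _ (eps_sumE D phi alpha)).
by rewrite (Dtrans_signed_binK D_comm).
Qed.
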